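(* Let $A$ be a deterministic KAT automaton over $(\Sigma_0,T)$ and let $\mathfrak{s}$ assign to each $p\in\Sigma_0$ a deterministic KAT automaton over $(\Sigma_1,T)$. If $r_1,r_2$ are states of $\mathsf{compose}^{\mathfrak{s}}(A)$ in the same locale, $\alpha\in\mathsf{At}_T$, and $r_1\xrightarrow{\alpha\mid p}r_1'$ and $r_2\xrightarrow{\alpha\mid p'}r_2'$ are non-local transitions of $\mathsf{compose}^{\mathfrak{s}}(A)$, then $p=p'$.
   Context: Atoms $\mathsf{At}_T=2^T$. Deterministic KAT automaton over $(\Sigma,T)$: $A=(Q,\delta,\iota)$, $Q$ finite, $\delta:Q\times\mathsf{At}_T\to\{\mathsf{accept},\mathsf{reject}\}+\Sigma\times Q$, $\iota:\mathsf{At}_T\to\{\mathsf{accept},\mathsf{reject}\}+\Sigma\times Q$. Write $q\xrightarrow{\alpha\mid p}q'$ for $\delta(q,\alpha)=(p,q')$. $\mathsf{compose}^{\mathfrak{s}}(A)$ for $A=(Q,\delta,\iota)$ over $(\Sigma_0,T)$ and $\mathfrak{s}(p)=(Q_p,\delta_p,\iota_p)$ over $(\Sigma_1,T)$: $\hat\delta(q,\alpha)=\mathsf{accept}$ if $\delta(q,\alpha)=\mathsf{accept}$; $=(p,q')$ if $\delta(q,\alpha)=(p,q')$ and $\iota_p(\alpha)\ne\mathsf{accept}$; $=\hat\delta(q',\alpha)$ if $\delta(q,\alpha)=(p,q')$ and $\iota_p(\alpha)=\mathsf{accept}$; $=\mathsf{reject}$ otherwise (including when the recursion does not terminate). $\hat\iota(\alpha)=\hat\delta(q,\alpha)$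 if $\iota(\alpha)=(p,q)$ and $\iota_p(\alpha)=\mathsf{accept}$, else $\iota(\alpha)$. $\mathsf{compose}^{\mathfrak{s}}(A)=(Q',\delta',\iota')$ over $(\Sigma_1,T)$ with $Q'=\sum_{p\in\Sigma_0}Q_p\times Q$ (disjoint union) and for $q_p\in Q_p$, $q\in Q$: (case 1) $\delta'((q_p,q),\alpha)=(p'',(q_p',q))$ if $\delta_p(q_p,\alpha)=(p'',q_p')$; (case 2) $=(p'',(q_{p'},q'))$ if $\delta_p(q_p,\alpha)=\mathsf{accept}$, $\hat\delta(q,\alpha)=(p',q')$ and $\iota_{p'}(\alpha)=(p'',q_{p'})$; (case 3) $=\mathsf{accept}$ if $\delta_p(q_p,\alpha)=\mathsf{accept}$ and $\hat\delta(q,\alpha)=\mathsf{accept}$; $=\mathsf{reject}$ otherwise. $\iota'(\alpha)=\mathsf{accept}$ if $\hat\iota(\alpha)=\mathsf{accept}$; $=(p'',(q_{p'},q))$ if $\hat\iota(\alpha)=(p',q)$ and $\iota_{p'}(\alpha)=(p'',q_{p'})$; $=\mathsf{reject}$ otherwise. Two states $(q_1,q_2),(q_3,q_4)$ of $\mathsf{compose}^{\mathfrak{s}}(A)$ are in the same locale if $q_2=q_4$ and $q_1,q_3$ belong to the same subautomaton, i.e. both lie in $Q_p$ for the same $p\in\Sigma_0$. A transition of $\mathsf{compose}^{\mathfrak{s}}(A)$ is local if it is produced by case 1 of $\delta'$, and non-local otherwise. *)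

From mathcomp Require Import all_boot.
Set Implicit Arguments. Unset Strict Implicit. Unset Printing Implicit Defensive.

Inductive res (Sigma : Type) (Q : Type) :=
| Acc | Rej | Tr of Sigma & Q.
Arguments Acc {Sigma Q}. Arguments Rej {Sigma Q}.

(* Deterministic KAT automaton over (Sigma, T): atoms At_T = 2^T = {set T}. *)
Record KATAut (Sigma : Type) (T : finType) := mkKATAut {
  state : finType;
  delta : state -> {set T} -> res Sigma state;
  iota  : {set T} -> res Sigma state }.

Definition is_acc (S Q : Type) (x : res S Q) : bool :=
  if x is Acc then true else false.

Section Compose.
Variables (Sigma0 : finType) (Sigma1 : Type) (T : finType).
Variables (A : KATAut Sigma0 T) (s : Sigma0 -> KATAut Sigma1 T).

(* A terminating unfolding visits pairwise distinct
   states, so #|Q| unfolding steps suffice; running out of fuel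
   corresponds to non-termination, which yields reject. *)
Fixpoint hat_delta_fuel (n : nat) (q : state A) (a : {set T})
  : res Sigma0 (state A) :=
  match delta q a with
  | Acc => Acc
  | Rej => Rej
  | Tr p q' =>
      if is_acc (iota (s p) a) then
        (if n is n'.+1 then hat_delta_fuel n' q' a else Rej)
      else Tr p q'
  end.

Definition hat_delta (q : state A) (a : {set T}) : res Sigma0 (state A) :=
  hat_delta_fuel #|state A| q a.

Definition hat_iota (a : {set T}) : res Sigma0 (state A) :=
  match iota A a with
  | Tr p q => if is_acc (iota (s p) a) then hat_delta q a else Tr p q
  | x => x
  end.

Definition cstate : finType := {p : Sigma0 & (state (s p) * state A)%type}.

Definition cdelta (r : cstate) (a : {set T}) : res Sigma1 cstate :=
  let: existT p (qp, q) := r in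
  match delta qp a with
  | Tr p'' qp' => Tr p'' (existT _ p (qp', q))
  | Acc =>
      match hat_delta q a with
      | Acc => Acc
      | Tr p' q' =>
          match iota (s p') a with
          | Tr p'' qp' => Tr p'' (existT _ p' (qp', q'))
          | _ => Rej
          end
      | Rej => Rej
      end
  | Rej => Rej
  end.

Definition ciota (a : {set T}) : res Sigma1 cstate :=
  match hat_iota a with
  | Acc => Acc
  | Tr p' q =>
      match iota (s p') a with
      | Tr p'' qp' => Tr p'' (existT _ p' (qp', q))
      | _ => Rej
      end
  | Rej => Rej
  end.

Definition compose : KATAut Sigma1 T := @mkKATAut Sigma1 T cstate cdelta ciota.

Definition same_locale (r1 r2 : cstate) : Prop :=
  projT1 r1 = projT1 r2 /\ (projT2 r1).2 = (projT2 r2).2.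

(* A transition from r on a is local iff it is produced by case 1, i.e. the
   sub-automaton component itself makes a transition. *)
Definition local_transition (r : cstate) (a : {set T}) : Prop :=
  let: existT p (qp, q) := r in
  exists p'' qp', delta qp a = Tr p'' qp'.

End Compose.

From Pilot Require Import Defs.
From mathcomp Require Import all_boot.
Set Implicit Arguments. Unset Strict Implicit. Unset Printing Implicit Defensive.

(* A non-local transition of compose^s(A) out of (q_p, q) ignores q_p: its
   letter is the first letter emitted by the sub-automaton s p' entered through
   hat-delta(q, alpha) = (p', q'), so it is a function of q and alpha alone,
   and these are shared by states in the same locale. *)

Section NonlocalLabel.
Variables (Sigma0 : finType) (Sigma1 : Type) (T : finType).
Variables (A : KATAut Sigma0 T) (s : Sigma0 -> KATAut Sigma1 T).

Definition nonlocal_label (q : state A) (a : {set T}) : option Sigma1 :=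
  if hat_delta s q a is Tr p' _ then
    if Defs.iota (s p') a is Tr p _ then Some p else None
  else None.

Lemma nonlocal_cdelta_label (r r' : cstate A s) (a : {set T}) (p : Sigma1) :
  ~ local_transition r a -> cdelta r a = Tr p r' ->
  nonlocal_label (projT2 r).2 a = Some p.
Proof.
case: r => x [qp q] /= nonlocal; rewrite /nonlocal_label.
case: (delta qp a) nonlocal => [| | p'' qp'] nonlocal //; last first.
  by case: nonlocal; exists p'', qp'.
case: (hat_delta s q a) => [| | p' q'] //.
by case: (Defs.iota (s p') a) => [| | p0 qp0] // [->].
Qed.

End NonlocalLabel.

Theorem lemma6p14 (Sigma0 : finType) (Sigma1 : Type) (T : finType)
  (A : KATAut Sigma0 T) (s : Sigma0 -> KATAut Sigma1 T)
  (r1 r2 r1' r2' : state (compose A s)) (a : {set T}) (p p' : Sigma1) :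
  same_locale r1 r2 ->
  delta r1 a = Tr p r1' ->
  delta r2 a = Tr p' r2' ->
  ~ local_transition r1 a ->
  ~ local_transition r2 a ->
  p = p'.
Proof.
move=> [_ same_q] tr1 tr2 nonlocal1 nonlocal2.
have := nonlocal_cdelta_label nonlocal1 tr1.
by rewrite same_q (nonlocal_cdelta_label nonlocal2 tr2) => -[].
Qed.
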